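(* Let $n\ge1$ and $d\ge0$ be integers, and let $M(x)$ be a monic complex polynomial of degree $2n$, written as $M=A^2+B$ with $A(x)=x^n+\sum_{j=0}^{n-1}a_jx^j$, $B(x)=\sum_{j=0}^{n-1}b_jx^j$. The equation $y''=M(x)y$ has a polynomial-hyperexponential solution of polynomial degree $d$ if and only if $$b_{n-1}^2=(n+2d)^2\quad\text{and}\quad \Delta_d(A(x),B(x))\cdot\Delta_d(-A(x),B(x))=0$$ (the latter as a polynomial identity in $x$). Consequently $\mathbb{L}'_{2n,d}$ is an algebraic subvariety of $\mathbb{M}_{2n}$ (its equations being $b_{n-1}^2=(n+2d)^2$ together with the coefficients in $x$ of $\Delta_d(A,B)\Delta_d(-A,B)$), contained in the union of the hyperplanes $b_{n-1}=2d+n$ and $-b_{n-1}=2d+n$.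
   Context: $\mathbb{Q}\{a,b\}$ is the ring of differential polynomials in two differential indeterminates $a,b$ over $\mathbb{Q}$. Define $\varphi$ on $2\times2$ matrices over $\mathbb{Q}\{a,b\}$ by $\varphi(C)=C'+\begin{pmatrix}-2a&1\\ b-a'&0\end{pmatrix}C$ (entrywise derivative), and $\Delta_p=-\det\left(\varphi^{p+1}(\mathrm{Id})\right)\in\mathbb{Q}\{a,b\}$. Equivalently, with $\ell_{-1}=1$, $r_{-1}=0$, $\ell_0=-2a$, $r_0=b-a'$, $\ell_{j+1}=\ell_j'+r_j+\ell_0\ell_j$, $r_{j+1}=r_j'+r_0\ell_j$, one has $\varphi^{p+1}(\mathrm{Id})=\begin{pmatrix}\ell_p&\ell_{p-1}\\ r_p&r_{p-1}\end{pmatrix}$ and $\Delta_p=r_p\ell_{p-1}-\ell_pr_{p-1}$ (e.g. $\Delta_0=b-a'$). $\Delta_d(A(x),B(x))$ means substituting $a\mapsto A(x)$, $b\mapsto B(x)$, with derivation $d/dx$. $\mathbb{M}_{2n}$ is the set of monic degree-$2n$ polynomials with coordinates $(a_0,\dots,a_{n-1},b_0,\dots,b_{n-1})$ given by the unique decomposition $M=A^2+B$ above. A polynomial-hyperexponential function of polynomial degree $d$ is $P_d(x)\exp(\int A(x)dx)$ with $P_d$ of degree exactly $d$ and $A$ a polynomial; $\mathbb{L}'_{2n,d}$ is the set of $M\in\mathbb{M}_{2n}$ such that $y''=My$ has such a solution. *)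

From HB Require Import structures.
From mathcomp Require Import all_boot all_order all_algebra.
Set Implicit Arguments. Unset Strict Implicit. Unset Printing Implicit Defensive.
Import Order.TTheory GRing.Theory Num.Theory.
Local Open Scope ring_scope.

Section Delta.
Variable C : numClosedFieldType.

Definition phi_mat (A B : {poly C}) : 'M[{poly C}]_2 :=
  \matrix_(i < 2, j < 2)
    if (i == 0 :> nat) then (if (j == 0 :> nat) then - (2%:R * A) else 1)
    else (if (j == 0 :> nat) then B - A^`() else 0).

Definition phi (A B : {poly C}) (Cm : 'M[{poly C}]_2) : 'M[{poly C}]_2 :=
  map_mx (fun p : {poly C} => p^`()) Cm + phi_mat A B *m Cm.

Definition Delta (p : nat) (A B : {poly C}) : {poly C} :=
  - \det (iter p.+1 (phi A B) 1%:M).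

(* y = P exp(int E) solves y'' = M y  iff  P'' + 2 E P' + (E' + E^2) P = M P. *)
Definition polyhyp_sol (M P E : {poly C}) : Prop :=
  P^`(2) + 2%:R * E * P^`() + (E^`() + E ^+ 2) * P = M * P.

Definition has_polyhyp_sol (M : {poly C}) (d : nat) : Prop :=
  exists P E : {poly C}, size P = d.+1 /\ polyhyp_sol M P E.

End Delta.

From HB Require Import structures.
From mathcomp Require Import all_boot all_order all_algebra.
From mathcomp Require Import ring zify.
Set Implicit Arguments. Unset Strict Implicit. Unset Printing Implicit Defensive.
Import Order.TTheory GRing.Theory Num.Theory.
Local Open Scope ring_scope.

(* Writing y = P exp(int E), the equation y'' = (A^2 + B) y becomes
   P'' + 2 E P' + (E' + E^2) P = (A^2 + B) P, and comparing degrees forces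
   E = a with a = A or a = -A; P then solves L P = 0, where
   L Q = Q'' - l0 Q' - r0 Q with l0 = -2a and r0 = B - a'.  The coefficients of
   degree n - 1 + deg P give b_(n-1) = a_n (2 deg P + n).
   Every solution Q of L Q = 0 satisfies Q^(k+1) = l_(k-1) Q' + r_(k-1) Q, and
   with S = l_(d-1) Q' + r_(d-1) Q one has the identity
     l_(d-1) S' - l_d S = l_(d-1)^2 L Q + Delta_d Q.
   For a solution P of degree d, S = P^(d+1) = 0, so Delta_d P = 0.
   Conversely, if Delta_d = 0, pick c with l_(d-1)(c) <> 0 and, by linear algebra,
   a polynomial Q <> 0 such that L Q vanishes to high order at c and S(c) = 0.
   The identity makes S, hence Q^(d+1), vanish at c to an order exceeding its
   degree, so deg Q <= d, and then L Q = 0 for the same reason; finally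
   b_(n-1)^2 = (n + 2d)^2 forces deg Q = d. *)

Section RingPoly.
Variable R : nzRingType.
Implicit Types p q : {poly R}.

Lemma size_derivn_leq p k : (size p^`(k) <= size p - k)%N.
Proof.
apply/leq_sizeP => j le_j; rewrite coef_derivn nth_default ?mul0rn //.
by rewrite -leq_subLR.
Qed.

Lemma coefM_top p q i j : (size p <= i.+1)%N -> (size q <= j.+1)%N ->
  (p * q)`_(i + j) = p`_i * q`_j.
Proof.
move=> le_p le_q; rewrite coefM (bigD1 (Ordinal (ltn_addr j (ltnSn i)))) //=.
rewrite addKn big1 ?addr0 // => -[t lt_t] /= ne_ti.
case: (ltngtP t i) => [lt_ti|lt_it|eq_ti]; last by rewrite -val_eqE /= eq_ti eqxx in ne_ti.
- by rewrite [q`__]nth_default ?mulr0 //; apply: leq_trans le_q _; lia.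
- by rewrite [p`__]nth_default ?mul0r //; apply: leq_trans le_p _.
Qed.

End RingPoly.

Lemma det_mx2 (R : comPzRingType) (X : 'M[R]_2) :
  \det X = X 0 0 * X 1 1 - X 0 1 * X 1 0.
Proof.
rewrite (expand_det_row _ 0) !big_ord_recl big_ord0 addr0 /cofactor !det_mx11 !mxE /=.
rewrite expr0 expr1 mul1r mulN1r mulrN.
by congr (_ * _ - _ * _); congr (X _ _); apply/val_inj.
Qed.

Lemma dvdp_size_eq0 (R : idomainType) (p f : {poly R}) :
  p %| f -> (size f < size p)%N -> f = 0.
Proof.
by move=> dvd_pf; apply: contraTeq => f_neq0; rewrite -leqNgt dvdp_leq.
Qed.

Section LinearOde.
Variables (R : idomainType) (l0 r0 : {poly R}).
Implicit Types (P Q : {poly R}) (p q : {poly R} * {poly R}).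

Definition ode (Q : {poly R}) : {poly R} := Q^`(2) - l0 * Q^`() - r0 * Q.

Definition lcomb (p : {poly R} * {poly R}) (Q : {poly R}) : {poly R} :=
  p.1 * Q^`() + p.2 * Q.

Definition next_lr (p : {poly R} * {poly R}) : {poly R} * {poly R} :=
  (p.1^`() + p.2 + l0 * p.1, p.2^`() + r0 * p.1).

(* [lr k] is the pair (l_(k-1), r_(k-1)); thus [lr 0] = (1, 0), [lr 1] = (l0, r0). *)
Definition lr (k : nat) : {poly R} * {poly R} := iter k next_lr (1, 0).

Definition cross (p q : {poly R} * {poly R}) : {poly R} := p.1 * q.2 - q.1 * p.2.

Lemma ode_linear : linear ode.
Proof. by move=> a P Q; rewrite /ode !derivnD !derivnZ !derivD !derivZ -!mul_polyC; ring. Qed.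

Lemma lcomb_linear p : linear (lcomb p).
Proof. by move=> a P Q; rewrite /lcomb !derivD !derivZ -!mul_polyC; ring. Qed.

Lemma deriv_lcomb p Q : (lcomb p Q)^`() = p.1 * ode Q + lcomb (next_lr p) Q.
Proof. by rewrite /lcomb /ode /next_lr /= !derivD !derivM; ring. Qed.

Lemma lcomb_first_order p Q :
  p.1 * (lcomb p Q)^`() - (next_lr p).1 * lcomb p Q =
  p.1 ^+ 2 * ode Q + cross p (next_lr p) * Q.
Proof. by rewrite deriv_lcomb /lcomb /cross; ring. Qed.

Lemma lcomb_lr0 Q : lcomb (lr 0) Q = Q^`().
Proof. by rewrite /lcomb /= mul1r mul0r addr0. Qed.

Lemma derivn_ode_sol Q : ode Q = 0 -> forall k, Q^`(k.+1) = lcomb (lr k) Q.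
Proof.
move=> odeQ; elim=> [|k IHk]; first by rewrite derivn1 lcomb_lr0.
by rewrite derivnS IHk deriv_lcomb odeQ mulr0 add0r.
Qed.

Lemma cross_lr_eq0 d P :
  size P = d.+1 -> ode P = 0 -> cross (lr d) (lr d.+1) = 0.
Proof.
move=> size_P odeP.
have P_neq0 : P != 0 by rewrite -size_poly_gt0 size_P.
have lcomb_eq0 k : (d <= k)%N -> lcomb (lr k) P = 0.
  by move=> le_dk; rewrite -derivn_ode_sol // derivn_poly0 // size_P.
have := lcomb_first_order (lr d) P.
rewrite !lcomb_eq0 // odeP deriv0 !mulr0 subrr add0r => /esym/eqP.
by rewrite mulf_eq0 (negPf P_neq0) orbF => /eqP.
Qed.

Lemma size_lr s : size l0 = s.+1 -> (size r0 <= s)%N ->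
  forall k, size (lr k).1 = (k * s).+1 /\ (size (lr k).2 <= k * s)%N.
Proof.
move=> size_l0 size_r0; elim=> [|k [size_u size_v]] /=.
  by rewrite size_poly1 size_poly0.
rewrite -/(lr k); set u := (lr k).1 in size_u *; set v := (lr k).2 in size_v *.
have size_du : (size u^`() <= k * s)%N.
  by have := size_derivn_leq u 1; rewrite size_u subn1.
have size_dv : (size v^`() <= k * s)%N.
  exact: leq_trans (size_derivn_leq v 1) (leq_trans (leq_subr 1 _) size_v).
have size_l0u : size (l0 * u) = (k.+1 * s).+1.
  by rewrite size_mul -?size_poly_gt0 ?size_l0 ?size_u //; lia.
split.
  rewrite addrC size_polyDl size_l0u //.
  by apply: leq_ltn_trans (size_polyD _ _) _; rewrite gtn_max; lia.
apply: leq_trans (size_polyD _ _) _; rewrite geq_max.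
by rewrite (leq_trans (size_polyMleq _ _)) ?size_u; lia.
Qed.

Lemma size_ode_leq k Q : (size Q <= k)%N -> (size (ode Q) <= size l0 + size r0 + k)%N.
Proof.
move=> size_Q.
have size_dQ : (size Q^`() <= k)%N :=
  leq_trans (size_derivn_leq Q 1) (leq_trans (leq_subr 1 _) size_Q).
have size_d2Q : (size Q^`(2) <= k)%N :=
  leq_trans (size_derivn_leq Q 2) (leq_trans (leq_subr 2 _) size_Q).
have size_l0dQ : (size (l0 * Q^`())%R <= size l0 + size r0 + k)%N.
  by apply: leq_trans (size_polyMleq _ _) _; lia.
have size_r0Q : (size (r0 * Q)%R <= size l0 + size r0 + k)%N.
  by apply: leq_trans (size_polyMleq _ _) _; lia.
rewrite /ode; apply: leq_trans (size_polyD _ _) _; rewrite size_polyN geq_max size_r0Q andbT.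
apply: leq_trans (size_polyD _ _) _; rewrite size_polyN geq_max size_l0dQ andbT.
exact: leq_trans size_d2Q (leq_addl _ _).
Qed.

Lemma ode_sol_top_coef m k Q :
  (size l0 <= m.+2)%N -> (size r0 <= m.+1)%N ->
  size Q = k.+1 -> ode Q = 0 -> r0`_m = - (l0`_m.+1 * k%:R).
Proof.
move=> size_l0 size_r0 size_Q odeQ.
have coef_d2Q : Q^`(2)`_(m + k) = 0.
  by rewrite nth_default // (leq_trans (size_derivn_leq _ _)) // size_Q; lia.
have coef_l0dQ : (l0 * Q^`())`_(m + k) = l0`_m.+1 * (Q`_k * k%:R).
  case: k size_Q {coef_d2Q} => [|k] size_Q.
    have -> : Q^`() = 0 by apply/size_poly_leq0P; have := size_derivn_leq Q 1; rewrite size_Q.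
    by rewrite mulr0 coef0 mulr0n !mulr0.
  rewrite -addSnnS coefM_top ?coef_deriv ?mulr_natr //.
  by have := size_derivn_leq Q 1; rewrite size_Q subn1.
have coef_r0Q : (r0 * Q)`_(m + k) = r0`_m * Q`_k by rewrite coefM_top ?size_Q.
have coef_ode : (ode Q)`_(m + k) = 0 by rewrite odeQ coef0.
rewrite /ode !coefB coef_d2Q coef_l0dQ coef_r0Q sub0r in coef_ode.
have lead_Q : Q`_k != 0.
  by rewrite -[k]/(k.+1.-1) -size_Q -lead_coefE lead_coef_eq0 -size_poly_gt0 size_Q.
have : (r0`_m + l0`_m.+1 * k%:R) * Q`_k == 0.
  by rewrite -oppr_eq0 -[X in _ == X]coef_ode; apply/eqP; ring.
by rewrite mulf_eq0 (negPf lead_Q) orbF addr_eq0 => /eqP.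
Qed.

End LinearOde.

Section FieldPoly.
Variable F : fieldType.
Implicit Types (f : {poly F}) (c : F).

Lemma dvdp_deriv_exp_XsubC c m f :
  ('X - c%:P) ^+ m %| f -> ('X - c%:P) ^+ m.-1 %| f^`().
Proof.
case: m => [|m] /dvdpP [g ->] /=; first by rewrite expr0 dvd1p.
rewrite derivM deriv_exp derivXsubC mul1r /= dvdp_add //.
  by rewrite exprS mulrCA !dvdp_mull.
by rewrite mulrnAr -mulr_natr dvdp_mulr // dvdp_mulIr.
Qed.

Lemma poly_kernel_neq0 N (f : {poly F} -> {poly F}) :
  linear f -> (forall Q, size (f Q) <= N)%N ->
  exists2 Q : {poly F}, Q != 0 & (size Q <= N.+1)%N /\ f Q = 0.
Proof.
move=> lin_f size_f.
pose g (v : 'rV[F]_N.+1) : 'rV[F]_N := poly_rV (f (rVpoly v)).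
have lin_g : linear g by move=> a u v; rewrite /g linearP lin_f linearP.
pose gL : {linear 'rV[F]_N.+1 -> 'rV[F]_N} :=
  HB.pack g (GRing.isLinear.Build _ _ _ _ g lin_g).
have : kermx (lin1_mx gL) != 0.
  by rewrite -mxrank_eq0 -lt0n mxrank_ker subn_gt0 ltnS rank_leq_col.
rewrite -nz_row_eq0; set v := nz_row _ => v_neq0.
have /sub_kermxP : (v <= kermx (lin1_mx gL))%MS by apply: nz_row_sub.
rewrite mul_rV_lin1 /= /g => fv0.
exists (rVpoly v); last split.
- by apply: contraNneq v_neq0 => v0; rewrite -[v]rVpolyK v0 linear0.
- exact: size_poly.
- by rewrite -[f _](poly_rV_K (size_f _)) fv0 linear0.
Qed.

End FieldPoly.

Section NumFieldPoly.
Variable F : numFieldType.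
Implicit Types (f u h : {poly F}) (c : F).

Lemma derivn_eq0 (p : {poly F}) k : (p^`(k) == 0) = (size p <= k)%N.
Proof.
apply/idP/idP => [/eqP dkp0|/derivn_poly0 -> //].
apply/leq_sizeP => j le_kj; have /eqP := congr1 (fun q : {poly F} => q`_(j - k)) dkp0.
by rewrite coef_derivn subnKC // coef0 mulrn_eq0 eqn0Ngt ffact_gt0 le_kj => /eqP.
Qed.

Lemma exists_nonroot (p : {poly F}) : p != 0 -> exists c, ~~ root p c.
Proof.
move=> p_neq0; pose cs := [seq i%:R : F | i <- iota 0 (size p)].
have uniq_cs : uniq cs.
  by rewrite map_inj_uniq ?iota_uniq // => i j /eqP; rewrite eqr_nat => /eqP.
have /hasP [c _ nroot_c] : has (predC (root p)) cs.
  rewrite has_predC; apply/negP => roots_cs.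
  by have := max_poly_roots p_neq0 roots_cs uniq_cs; rewrite size_map size_iota ltnn.
by exists c.
Qed.

Lemma first_order_dvdp_exp_XsubC c N u h f : ~~ root u c -> root f c ->
  ('X - c%:P) ^+ N %| u * f^`() - h * f -> ('X - c%:P) ^+ N.+1 %| f.
Proof.
move=> nuc fc dvd_N.
have [-> | f_neq0] := eqVneq f 0; first exact: dvdp0.
have [m [g]] := multiplicity_XsubC f c; rewrite f_neq0 /= => ngc def_f.
case: m def_f => [|m] def_f; first by rewrite def_f expr0 mulr1 (negPf ngc) in fc.
pose w := u * (g^`() * ('X - c%:P) + g *+ m.+1) - h * g * ('X - c%:P).
have def_w : u * f^`() - h * f = w * ('X - c%:P) ^+ m.
  by rewrite /w def_f derivM deriv_exp derivXsubC mul1r /= exprS; ring.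
have nwc : ~~ root w c.
  rewrite /root /w !hornerE subrr !mulr0 add0r subr0 hornerMn mulrnAr.
  by rewrite mulrn_eq0 negb_or mulf_neq0.
have le_Nm : (N <= m)%N.
  have w_neq0 : w != 0 by apply: contraNneq nwc => ->; apply: root0.
  rewrite def_w -mup_geq ?mulf_neq0 ?expf_neq0 ?polyXsubC_eq0 // in dvd_N.
  by rewrite mupMr // mup_XsubCX eqxx in dvd_N.
by rewrite def_f dvdp_mull // dvdp_exp2l.
Qed.

End NumFieldPoly.

Section PolynomialSolution.
Variables (F : numFieldType) (l0 r0 : {poly F}).
Implicit Types (P Q : {poly F}) (p : {poly F} * {poly F}) (c : F).

Lemma local_ode_sol N c p : exists2 Q : {poly F}, Q != 0 &
  [/\ (size Q <= N.+2)%N, ('X - c%:P) ^+ N %| ode l0 r0 Q & root (lcomb p Q) c].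
Proof.
(* The remainder has size at most N, so the value at c can be stored in degree N. *)
pose f Q := ode l0 r0 Q %% ('X - c%:P) ^+ N + (lcomb p Q).[c] *: 'X^N.
have lin_f : linear f.
  move=> a P Q; rewrite /f ode_linear lcomb_linear modpD modpZl hornerD hornerZ.
  by rewrite scalerDl -scalerA scalerDr addrACA.
have size_mod Q : (size (ode l0 r0 Q %% ('X - c%:P) ^+ N)%R <= N)%N.
  by rewrite -ltnS -(size_exp_XsubC N c) ltn_modp expf_neq0 ?polyXsubC_eq0.
have size_f Q : (size (f Q) <= N.+1)%N.
  apply: leq_trans (size_polyD _ _) _; rewrite geq_max (leq_trans (size_mod Q)) //=.
  by rewrite (leq_trans (size_scale_leq _ _)) // size_polyXn.
have [Q Q_neq0 [size_Q fQ0]] := poly_kernel_neq0 lin_f size_f.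
have root_c : (lcomb p Q).[c] = 0.
  have /(congr1 (fun q : {poly F} => q`_N)) := fQ0.
  by rewrite coef0 coefD coefZ coefXn eqxx mulr1 nth_default ?add0r.
exists Q => //; split => //; last exact/eqP.
by apply/modp_eq0P; move: fQ0; rewrite /f root_c scale0r addr0.
Qed.

Lemma dvdp_derivn_sub_lcomb c N Q : ('X - c%:P) ^+ N %| ode l0 r0 Q ->
  forall k, ('X - c%:P) ^+ (N.+1 - k) %| Q^`(k.+1) - lcomb (lr l0 r0 k) Q.
Proof.
move=> dvd_ode; elim=> [|k IHk]; first by rewrite derivn1 lcomb_lr0 subrr dvdp0.
have -> : Q^`(k.+2) - lcomb (lr l0 r0 k.+1) Q =
    (Q^`(k.+1) - lcomb (lr l0 r0 k) Q)^`() + (lr l0 r0 k).1 * ode l0 r0 Q.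
  by rewrite derivnS derivB (deriv_lcomb l0 r0); ring.
rewrite dvdp_add // ?subnS ?dvdp_deriv_exp_XsubC //.
by rewrite dvdp_mull // (dvdp_trans _ dvd_ode) // dvdp_exp2l //; lia.
Qed.

Lemma ode_poly_sol_of_cross_eq0 d :
  (lr l0 r0 d).1 != 0 -> cross (lr l0 r0 d) (lr l0 r0 d.+1) = 0 ->
  exists2 Q : {poly F}, Q != 0 & (size Q <= d.+1)%N /\ ode l0 r0 Q = 0.
Proof.
move=> lr_neq0 cross0; have [c nroot_c] := exists_nonroot lr_neq0.
(* N bounds the size of [ode Q] whenever size Q <= d + 1. *)
pose N := (size l0 + size r0 + d).+1.
have [Q Q_neq0 [size_Q dvd_ode root_c]] := local_ode_sol N c (lr l0 r0 d).
have dvd_lcomb : ('X - c%:P) ^+ N.+1 %| lcomb (lr l0 r0 d) Q.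
  apply: (first_order_dvdp_exp_XsubC (h := (next_lr l0 r0 (lr l0 r0 d)).1) nroot_c root_c).
  by rewrite (lcomb_first_order l0 r0) cross0 mul0r addr0 dvdp_mull.
have size_Qd : (size Q <= d.+1)%N.
  rewrite -derivn_eq0; apply/eqP/(dvdp_size_eq0 (p := ('X - c%:P) ^+ (N.+1 - d))).
    rewrite -(subrK (lcomb (lr l0 r0 d) Q) Q^`(d.+1)) dvdp_add ?dvdp_derivn_sub_lcomb //.
    by rewrite (dvdp_trans _ dvd_lcomb) // dvdp_exp2l // leq_subr.
  rewrite size_exp_XsubC ltnS.
  exact: leq_trans (size_derivn_leq _ _) (leq_sub2r d.+1 size_Q).
exists Q => //; split => //.
by apply: (dvdp_size_eq0 dvd_ode); rewrite size_exp_XsubC ltnS /N -addnS size_ode_leq.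
Qed.

End PolynomialSolution.

Section PolyHyperexponential.
Variable C : numClosedFieldType.
Implicit Types (A B P Q E a : {poly C}).

Local Notation odeAB a B := (ode (- (2%:R * a)) (B - a^`())).
Local Notation nextAB a B := (next_lr (- (2%:R * a)) (B - a^`())).
Local Notation lrAB a B := (lr (- (2%:R * a)) (B - a^`())).

Lemma phi_col A B (X : 'M_2) j :
  ((phi A B X) 0 j, (phi A B X) 1 j) = nextAB A B (X 0 j, X 1 j).
Proof.
rewrite /phi !mxE !big_ord_recl !big_ord0 !mxE /=.
have -> : lift ord0 ord0 = 1 :> 'I_2 by apply/val_inj.
by rewrite /next_lr /=; congr (_, _); ring.
Qed.

Lemma iter_phi_col A B k (X : 'M_2) j :
  ((iter k (phi A B) X) 0 j, (iter k (phi A B) X) 1 j) =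
  iter k (nextAB A B) (X 0 j, X 1 j).
Proof. by elim: k => //= k <-; rewrite phi_col. Qed.

Lemma Delta_cross d A B : Delta d A B = cross (lrAB A B d) (lrAB A B d.+1).
Proof.
have lr_01 : iter d.+1 (nextAB A B) (0, 1) = lrAB A B d.
  by rewrite iterSr /next_lr /= !mulr0 !addr0 deriv0 add0r -[1]/(1%:P) derivC.
pose I2 : 'M[{poly C}]_2 := 1%:M.
have col0 : (I2 0 0, I2 1 0) = (1, 0) by rewrite !mxE.
have col1 : (I2 0 1, I2 1 1) = (0, 1) by rewrite !mxE.
rewrite /Delta det_mx2 -/I2.
have := iter_phi_col A B d.+1 I2 0; rewrite col0 -/(lrAB A B d.+1).
have := iter_phi_col A B d.+1 I2 1; rewrite col1 lr_01.
move: (lrAB A B d) (lrAB A B d.+1) => [u v] [u' v'] [-> ->] [-> ->].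
by rewrite /cross /=; ring.
Qed.

Lemma polyhyp_solE A B P a : a ^+ 2 = A ^+ 2 ->
  polyhyp_sol (A ^+ 2 + B) P a <-> odeAB a B P = 0.
Proof.
move=> sq_a.
have -> : odeAB a B P = P^`(2) + 2%:R * a * P^`() + (a^`() + a ^+ 2) * P - (A ^+ 2 + B) * P.
  by rewrite /ode -sq_a; ring.
by rewrite /polyhyp_sol; split => [->|/eqP]; rewrite ?subrr // subr_eq0 => /eqP.
Qed.

Lemma size_polyhyp_rest P E : P != 0 ->
  (size (P^`(2) + 2%:R * E * P^`() + E^`() * P)%R <= (size E + size P).-2)%N.
Proof.
rewrite -size_poly_gt0 => size_P.
have [-> | ] := eqVneq E 0.
  by rewrite deriv0 mulr0 !mul0r !addr0 size_poly0 add0n -subn2; apply: size_derivn_leq.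
rewrite -size_poly_gt0 => size_E.
have size_2E : size (2%:R * E) = size E.
  by rewrite mulr_natl -scaler_nat size_scale ?pnatr_eq0.
have size_d2P := size_derivn_leq P 2.
have size_dP : (size P^`() <= size P - 1)%N by rewrite -derivn1 size_derivn_leq.
have size_dE : (size E^`() <= size E - 1)%N by rewrite -derivn1 size_derivn_leq.
have := size_polyMleq (2%:R * E) P^`(); have := size_polyMleq E^`() P.
rewrite size_2E; set sP := size P in size_P size_d2P size_dP *.
set sE := size E in size_E size_dE * => size_dEP size_EdP.
apply: leq_trans (size_polyD _ _) _; rewrite geq_max; apply/andP; split; last lia.
apply: leq_trans (size_polyD _ _) _; rewrite geq_max; apply/andP; split.
  by apply: leq_trans size_d2P _; lia.
by apply: leq_trans size_EdP _; lia.
Qed.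

Lemma polyhyp_sol_exponent n A B P E : size A = n.+1 -> (size B <= n)%N -> P != 0 ->
  polyhyp_sol (A ^+ 2 + B) P E -> E = A \/ E = - A.
Proof.
move=> size_A size_B P_neq0 sol.
have [G_eq0 | G_neq0] := eqVneq (E - A) 0; first by left; apply/eqP; rewrite -subr_eq0 G_eq0.
have [H_eq0 | H_neq0] := eqVneq (E + A) 0; first by right; apply/eqP; rewrite -addr_eq0 H_eq0.
exfalso; set G := E - A in G_neq0; set H := E + A in H_neq0.
have size_twice (Z : {poly C}) : size (Z *+ 2) = size Z.
  by rewrite -scaler_nat size_scale ?pnatr_eq0.
have size_GH : size (G * H) = (size G + size H).-1 by rewrite size_mul.
have le_max_GH : (maxn (size G) (size H) <= size (G * H)%R)%N.
  by rewrite size_GH geq_max -!size_poly_gt0 in G_neq0 H_neq0 *; lia.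
have le_E_GH : (size E <= size (G * H)%R)%N.
  rewrite -size_twice (_ : E *+ 2 = G + H); last by rewrite /G /H mulr2n; ring.
  exact: leq_trans (size_polyD _ _) le_max_GH.
have lt_B_GH : (size B < size (G * H)%R)%N.
  apply: leq_ltn_trans size_B _; rewrite -ltnS -size_A -(size_twice A).
  rewrite (_ : A *+ 2 = H - G); last by rewrite /G /H mulr2n; ring.
  by apply: leq_trans (size_polyD _ _) _; rewrite size_polyN maxnC.
have size_GHB : size (G * H - B) = size (G * H) by rewrite size_polyDl // size_polyN.
have size_lhs : size ((G * H - B) * P) = (size (G * H) + size P).-1.
  rewrite size_mul ?size_GHB // -size_poly_gt0 size_GHB.
  exact: leq_ltn_trans (leq0n _) lt_B_GH.
have sol0 : P^`(2) + 2%:R * E * P^`() + (E^`() + E ^+ 2) * P - (A ^+ 2 + B) * P = 0.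
  by rewrite sol subrr.
have key : (G * H - B) * P = - (P^`(2) + 2%:R * E * P^`() + E^`() * P).
  by apply/eqP; rewrite -subr_eq0 -[X in _ == X]sol0 /G /H; apply/eqP; ring.
have := congr1 (fun p : {poly C} => size p) key; rewrite /= size_lhs size_polyN => size_eq.
have := size_polyhyp_rest E P_neq0; rewrite -size_eq -size_poly_gt0 in P_neq0 *; lia.
Qed.

Lemma top_coef_B m k a B Q : (size a <= m.+2)%N -> (size B <= m.+1)%N ->
  size Q = k.+1 -> odeAB a B Q = 0 -> B`_m = a`_m.+1 * (2 * k + m.+1)%N%:R.
Proof.
move=> size_a size_B size_Q odeQ.
have size_l0 : (size (- (2%:R * a))%R <= m.+2)%N.
  by rewrite size_polyN mulr_natl -scaler_nat size_scale ?pnatr_eq0.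
have size_r0 : (size (B - a^`())%R <= m.+1)%N.
  rewrite (leq_trans (size_polyD _ _)) // size_polyN geq_max size_B -derivn1.
  exact: leq_trans (size_derivn_leq _ _) (leq_sub2r 1 size_a).
have := ode_sol_top_coef size_l0 size_r0 size_Q odeQ.
rewrite coefB coef_deriv coefN mulr_natl coefMn => /eqP; rewrite subr_eq => /eqP ->.
rewrite -[a`_m.+1 *+ m.+1]mulr_natr -[a`_m.+1 *+ 2]mulr_natr natrD natrM; ring.
Qed.

Lemma Delta_eq0_of_ode_sol d a B P :
  size P = d.+1 -> odeAB a B P = 0 -> Delta d a B = 0.
Proof. by rewrite Delta_cross; apply: cross_lr_eq0. Qed.

Lemma ode_sol_of_Delta_eq0 n d a B : size a = n.+1 -> (size B <= n)%N ->
  Delta d a B = 0 -> exists2 Q : {poly C}, Q != 0 & (size Q <= d.+1)%N /\ odeAB a B Q = 0.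
Proof.
move=> size_a size_B; rewrite Delta_cross; apply: ode_poly_sol_of_cross_eq0.
have size_l0 : size (- (2%:R * a)) = n.+1.
  by rewrite size_polyN mulr_natl -scaler_nat size_scale ?pnatr_eq0.
have size_r0 : (size (B - a^`())%R <= n)%N.
  rewrite (leq_trans (size_polyD _ _)) // size_polyN geq_max size_B -derivn1.
  by apply: leq_trans (size_derivn_leq _ _) _; rewrite size_a subn1.
by rewrite -size_poly_gt0 (size_lr size_l0 size_r0 d).1.
Qed.

Lemma has_polyhyp_solP n d A B : size A = n.+1 -> (size B <= n)%N ->
  has_polyhyp_sol (A ^+ 2 + B) d <->
  exists2 a : {poly C}, a = A \/ a = - A &
    exists P : {poly C}, size P = d.+1 /\ odeAB a B P = 0.
Proof.
move=> size_A size_B.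
have sq a : a = A \/ a = - A -> a ^+ 2 = A ^+ 2 by case=> ->; rewrite ?sqrrN.
split => [[P [E [size_P sol]]] | [a a_pm [P [size_P odeP]]]].
  have P_neq0 : P != 0 by rewrite -size_poly_gt0 size_P.
  have E_pm := polyhyp_sol_exponent size_A size_B P_neq0 sol.
  by exists E => //; exists P; split => //; apply/(polyhyp_solE _ _ (sq E E_pm)).
by exists P, a; split => //; apply/(polyhyp_solE _ _ (sq a a_pm)).
Qed.

Lemma polyhyp_sol_sign m d A B : size A = m.+2 -> (size B <= m.+1)%N ->
  has_polyhyp_sol (A ^+ 2 + B) d -> exists2 a, a = A \/ a = - A &
    Delta d a B = 0 /\ B`_m = a`_m.+1 * (2 * d + m.+1)%N%:R.
Proof.
move=> size_A size_B /(has_polyhyp_solP d size_A size_B) [a a_pm [P [size_P odeP]]].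
exists a => //; split; first exact: Delta_eq0_of_ode_sol odeP.
by apply: top_coef_B size_B size_P odeP; case: a_pm => ->; rewrite ?size_polyN size_A.
Qed.

Lemma has_polyhyp_sol_of_Delta_eq0 m d A B a :
  size A = m.+2 -> (size B <= m.+1)%N -> A`_m.+1 ^+ 2 = 1 -> a = A \/ a = - A ->
  B`_m ^+ 2 = (m.+1 + 2 * d)%N%:R ^+ 2 -> Delta d a B = 0 ->
  has_polyhyp_sol (A ^+ 2 + B) d.
Proof.
move=> size_A size_B sq_lead a_pm sq_B Da.
have [size_a sq_lead_a] : size a = m.+2 /\ a`_m.+1 ^+ 2 = 1.
  by case: a_pm => ->; rewrite ?size_polyN ?coefN ?sqrrN.
have [Q Q_neq0 [size_Q odeQ]] := ode_sol_of_Delta_eq0 size_a size_B Da.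
have size_Qk : size Q = (size Q).-1.+1 by rewrite prednK ?size_poly_gt0.
have Bk := top_coef_B (eq_leq size_a) size_B size_Qk odeQ.
have deg_Q : (size Q).-1 = d.
  move: sq_B; rewrite Bk exprMn sq_lead_a mul1r -!natrX => /eqP.
  by rewrite eqr_nat eqn_exp2r // => /eqP; lia.
apply/(has_polyhyp_solP d size_A size_B); exists a => //.
by exists Q; rewrite size_Qk deg_Q.
Qed.

End PolyHyperexponential.

Theorem mainTheorem7 (C : numClosedFieldType) (n d : nat) (M A B : {poly C}) :
  (1 <= n)%N ->
  M \is monic -> size M = (2 * n).+1 ->
  (size (A - 'X^n)%R <= n)%N -> (size B <= n)%N ->
  M = A ^+ 2 + B ->
  (has_polyhyp_sol M d <->
     (B`_(n.-1) ^+ 2 = ((n + 2 * d)%N%:R) ^+ 2 /\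
      Delta d A B * Delta d (- A) B = 0))
  /\ (has_polyhyp_sol M d ->
        B`_(n.-1) = ((2 * d + n)%N%:R) \/ - B`_(n.-1) = ((2 * d + n)%N%:R)).
Proof.
(* Monicity and the degree of M are implied by the shape of A and B. *)
case: n => [//|m] _ _ _ size_AX size_B -> /=.
have lead_A : A`_m.+1 = 1.
  have : (A - 'X^(m.+1))`_m.+1 = 0 by rewrite nth_default.
  by rewrite coefB coefXn eqxx => /eqP; rewrite subr_eq0 => /eqP.
have size_A : size A = m.+2.
  by rewrite -(subrK 'X^(m.+1) A) addrC size_polyDl size_polyXn.
have sq_lead : A`_m.+1 ^+ 2 = 1 by rewrite lead_A expr1n.
split; first split.
- case/(polyhyp_sol_sign size_A size_B) => a a_pm [Da ->].
  split; first by case: a_pm => ->; rewrite ?coefN exprMn ?sqrrN sq_lead mul1r addnC.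
  by case: a_pm Da => <- ->; rewrite ?mul0r ?mulr0.
- case=> sq_B /eqP; rewrite mulf_eq0 => /orP [] /eqP.
    by apply: (has_polyhyp_sol_of_Delta_eq0 size_A size_B sq_lead _ sq_B); left.
  by apply: (has_polyhyp_sol_of_Delta_eq0 size_A size_B sq_lead _ sq_B); right.
- case/(polyhyp_sol_sign size_A size_B) => a [->|->] [_ ->]; [left | right].
    by rewrite lead_A mul1r.
  by rewrite coefN lead_A mulN1r opprK.
Qed.
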